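(* A superreduced walk with excess $\xi$ has length at most $4\xi$ and spans a tree with at most $\xi+1$ vertices. Consequently its generating function $S_\xi(v,z)$ is a polynomial of degree $\xi+1$ in $v$ and $2\xi$ in $z$.
   Context: A tree walk of size $m$ and length $L$ is a sequence $W=(v_1,\dots,v_L)$ of elements of $[m]$ in which every element of $[m]$ occurs, such that the graph with vertex set $[m]$ and edges $\{v_j,v_{j+1}\}$ ($1\le j<L$) and $\{v_L,v_1\}$ is a tree; $W$ is the closed walk $v_1\to\dots\to v_L\to v_1$. Each edge is traversed $2k$ times ($k\ge1$); its excess is $k-1$; it is simple if $k=1$. The excess of $W$ is the sum of the edge excesses, i.e. $\ell-(m-1)$ for length $2\ell$ and size $m$. A superreduced walk is a tree walk with no simple edge (the one-vertex walk of length $0$ included). With $s_{m,2\ell}$ the number of superreduced walks of size $m$ and length $2\ell$, $S_\xi(v,z)=\sum_{\ell,m:\,\ell-m+1=\xi}s_{m,2\ell}\frac{v^m}{m!}z^\ell$. *)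

From mathcomp Require Import all_boot all_order all_algebra.
Set Implicit Arguments. Unset Strict Implicit. Unset Printing Implicit Defensive.
Import GRing.Theory.

(* Cycles with distinct vertices have at most #|T| vertices, so the
   acyclicity quantifier is bounded to make the predicate boolean. *)
Definition is_tree (T : finType) (e : rel T) : bool :=
  [&& 0 < #|T|,
      [forall x, ~~ e x x],
      [forall x, forall y, connect e x y] &
      [forall n : 'I_#|T|.+1, forall c : n.-tuple T,
         (uniq c && (2 < n)) ==> ~~ cycle e c]].

(* The closed walk v_1 -> ... -> v_L -> v_1 : its list of steps
   (v_j, v_{j+1}) for j < L and (v_L, v_1). *)
Definition steps (T : eqType) (W : seq T) : seq (T * T) := zip W (rot 1 W).

Definition wadj (T : eqType) (W : seq T) : rel T :=
  fun x y => has (fun p => (p == (x, y)) || (p == (y, x))) (steps W).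

Definition wmult (T : eqType) (W : seq T) (x y : T) : nat :=
  count (fun p => (p == (x, y)) || (p == (y, x))) (steps W).

Definition tree_walk (m : nat) (W : seq 'I_m) : bool :=
  [forall x : 'I_m, x \in W] && is_tree (wadj W).

(* Superreduced walk: a tree walk with no simple edge (edge traversed exactly
   twice), together with the one-vertex walk of length 0. *)
Definition superreduced (m : nat) (W : seq 'I_m) : bool :=
  ((m == 1%N) && (W == [::]))
  || (tree_walk W && [forall x, forall y, wadj W x y ==> (wmult W x y != 2%N)]).

Definition s_count (m l : nat) : nat :=
  #|[pred t : (2 * l).-tuple 'I_m | superreduced (tval t)]|.

(* Coefficient of v^m z^l in S_xi(v,z) = sum_{l - m + 1 = xi} s_{m,2l} v^m/m! z^l. *)
Definition S_coef (xi m l : nat) : rat :=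
  if (l + 1 == xi + m)%N then ((s_count m l)%:R / (m`!)%:R)%R else 0%R.

(** In a tree walk every edge is traversed an even number of times: deleting
    the edge cuts the tree in two, and a closed walk crosses the cut an even
    number of times.  In a superreduced walk every edge is therefore traversed
    at least four times.  Sending each vertex other than the starting one to the
    edge along which it is first entered picks out m - 1 distinct edges, so the
    length is at least 4(m - 1); with length 2l and l + 1 = xi + m this is
    m <= xi + 1 and 2l <= 4 xi.  Both bounds are attained by the star walk
    0 k 0 k ... through the xi leaves k, which is superreduced of size xi + 1
    and length 4 xi. *)

From mathcomp Require Import all_boot all_order all_algebra.
From mathcomp Require Import zify.
Import GRing.Theory Num.Theory.

Set Implicit Arguments.
Unset Strict Implicit.
Unset Printing Implicit Defensive.

Lemma size_steps (T : eqType) (W : seq T) : size (steps W) = size W.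
Proof. by rewrite /steps size_zip size_rot minnn. Qed.

Lemma wadj_sym (T : eqType) (W : seq T) : symmetric (wadj W).
Proof. by move=> x y; apply: eq_has => p; rewrite orbC. Qed.

Lemma wadj_steps (T : eqType) (W : seq T) x y : (x, y) \in steps W -> wadj W x y.
Proof. by move=> xy; apply/hasP; exists (x, y); rewrite ?eqxx. Qed.

Lemma odd_count_cut_path (T : eqType) (f : pred T) (x y : T) (s : seq T) :
  odd (count (fun p => f p.1 != f p.2) (zip (x :: s) (rcons s y))) = f x (+) f y.
Proof.
elim: s x => [|z s IH] x /=; first by rewrite addn0; case: (f x); case: (f y).
by rewrite oddD IH; case: (f x); case: (f z); case: (f y).
Qed.

Lemma even_count_cut_steps (T : eqType) (f : pred T) (W : seq T) :
  ~~ odd (count (fun p => f p.1 != f p.2) (steps W)).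
Proof. by case: W => // x s; rewrite /steps rot1_cons odd_count_cut_path addbb. Qed.

Lemma tree_bridge (T : finType) (e : rel T) (a b : T) :
  is_tree e -> e a b ->
  ~~ connect [rel x y | e x y && ((x, y) \notin [:: (a, b); (b, a)])] b a.
Proof.
case/and4P => _ /forallP noloop _ /forallP acyclic eab.
apply/negP => /connectP [p /shortenP [[|x [|y r]] cut_p uniq_p _] a_last] //=.
- by move: eab (noloop a); rewrite a_last => ->.
- by move: cut_p; rewrite /= in a_last; rewrite -a_last /= !inE eqxx orbT andbF.
have size_lt : size [:: b, x, y & r] < #|T|.+1.
  by rewrite ltnS -(card_uniqP uniq_p) max_card.
have cycle_p : cycle e [:: b, x, y & r].
  rewrite -[cycle _ _]/(path e b (rcons [:: x, y & r] b)) rcons_path -a_last eab andbT.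
  by apply: sub_path cut_p => u v /andP[].
by move: (acyclic (Ordinal size_lt)) => /forallP/(_ (in_tuple _)); rewrite uniq_p cycle_p.
Qed.

Lemma tree_wmult_even (T : finType) (W : seq T) (a b : T) :
  is_tree (wadj W) -> wadj W a b -> ~~ odd (wmult W a b).
Proof.
move=> tree_W ab.
pose e' : rel T := fun x y => wadj W x y && ((x, y) \notin [:: (a, b); (b, a)]).
pose f := connect e' b.
have not_fa : ~~ f a := tree_bridge tree_W ab.
have e'_sym : connect_sym e'.
  apply: sym_connect_sym => x y.
  by rewrite /e' wadj_sym !inE !xpair_eqE (andbC (y == a)) (andbC (y == b)) orbC.
pose edge_ab (p : T * T) := (p == (a, b)) || (p == (b, a)).
suff crossing : {in steps W, edge_ab =1 (fun p => f p.1 != f p.2)}.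
  by rewrite /wmult (eq_in_count crossing) even_count_cut_steps.
move=> [x y] /wadj_steps xy /=.
rewrite /edge_ab; case: (boolP (_ || _)) => [/orP[] /eqP[-> ->] | not_ab] /=.
  1,2: by rewrite (negbTE not_fa) /f connect0.
have e'xy : e' x y by rewrite /e' xy !inE not_ab.
by rewrite /f (same_connect1r e'_sym e'xy) eqxx.
Qed.

Lemma tree_wmult_ge4 (T : finType) (W : seq T) (x y : T) :
  is_tree (wadj W) -> wadj W x y -> wmult W x y != 2 -> 4 <= wmult W x y.
Proof.
move=> tree_W xy; have := tree_wmult_even tree_W xy.
have : 0 < wmult W x y by rewrite /wmult -has_count.
by case: (wmult W x y) => [|[|[|[|n]]]].
Qed.

Lemma sum_count_disjoint (I : finType) (D : {pred I}) (T : Type) (Q : I -> pred T)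
    (t : seq T) :
  {in D &, forall i j p, Q i p -> Q j p -> i = j} ->
  \sum_(i in D) count (Q i) t <= size t.
Proof.
move=> Q_disj; elim: t => [|p t IH]; first by rewrite big1.
rewrite (eq_bigr (fun i => Q i p + count (Q i) t)) // big_split /= -add1n leq_add //.
case: (pickP (fun i => (i \in D) && Q i p)) => [i /andP[Di Qip] | none].
  rewrite (bigD1 i) //= Qip big1 // => j /andP[Dj ji]; case Qjp: (Q j p) => //.
  by rewrite (Q_disj j i Dj Di p Qjp Qip) eqxx in ji.
by rewrite big1 // => i Di; move: (none i); rewrite Di /= => ->.
Qed.

Section FirstVisit.

Variables (T : eqType) (r : T) (s : seq T).

(* The vertex from which the walk [r :: s] first enters [x]. *)
Definition first_pred (x : T) : T := nth r (r :: s) (index x s).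

Lemma first_pred_step x : x \in s -> (first_pred x, x) \in steps (r :: s).
Proof.
move=> xs; have lt_xs : index x s < size s by rewrite index_mem.
have -> : (first_pred x, x) = nth (r, r) (steps (r :: s)) (index x s).
  by rewrite /steps nth_zip ?size_rot // rot1_cons nth_rcons lt_xs nth_index.
by rewrite mem_nth // size_steps /= ltnW.
Qed.

Lemma index_first_pred x :
  x \in s -> x != r -> index (first_pred x) (r :: s) < index x (r :: s).
Proof.
move=> xs xr; rewrite [index x _]/= eq_sym (negbTE xr) ltnS index_nth //=.
by rewrite ltnS index_size.
Qed.

End FirstVisit.

Lemma tree_walk_size_ge (T : finType) (W : seq T) :
  [forall x, x \in W] -> is_tree (wadj W) ->
  [forall x, forall y, wadj W x y ==> (wmult W x y != 2)] ->
  4 * #|T|.-1 <= size W.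
Proof.
move=> /forallP W_all tree_W /forallP no_simple.
case: W W_all tree_W no_simple => [|r s] W_all tree_W no_simple.
  by case/and4P: tree_W => /card_gt0P[x _]; move: (W_all x).
have in_s x : x \in predC1 r -> x \in s.
  by move=> xr; move: (W_all x); rewrite inE (negbTE xr).
pose par := first_pred r s.
pose parent_edge x (p : T * T) := (p == (par x, x)) || (p == (x, par x)).
rewrite -size_steps -(cardC1 r) mulnC -sum_nat_const.
apply: (@leq_trans (\sum_(x in predC1 r) count (parent_edge x) (steps (r :: s)))).
  apply: leq_sum => x xr; have px := wadj_steps (first_pred_step r (in_s x xr)).
  exact: tree_wmult_ge4 tree_W px (implyP (forallP (no_simple _) x) px).
(* Equal first-entry edges of x != y would force par x = y and par y = x,
   contradicting the order of first visits. *)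
apply: sum_count_disjoint => x y xr yr p.
have lt_x := index_first_pred (in_s x xr) xr.
have lt_y := index_first_pred (in_s y yr) yr.
case/orP=> /eqP-> /orP[] /eqP[] // => [pxy pyx | pyx pxy];
  by move: lt_x lt_y; rewrite /par in pxy pyx; rewrite pxy -pyx => /ltn_trans/[apply]; rewrite ltnn.
Qed.

Lemma superreduced_size_ge (m : nat) (W : seq 'I_m) :
  superreduced W -> 4 * (m - 1) <= size W.
Proof.
case/orP => [/andP[/eqP m1 /eqP->] | /andP[/andP[W_all tree_W] no_simple]].
  by rewrite m1.
by rewrite subn1 -{1}(card_ord m) tree_walk_size_ge.
Qed.

Lemma star_is_tree (T : finType) (e : rel T) (z : T) :
  (forall x y, e x y -> (x == z) != (y == z)) ->
  (forall x, x != z -> e x z && e z x) -> is_tree e.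
Proof.
move=> star spokes; apply/and4P; split.
- by apply/card_gt0P; exists z.
- by apply/forallP => x; apply/negP => /star; rewrite eqxx.
- have to_z x : connect e x z && connect e z x.
    by have [-> | /spokes/andP[xz zx]] := eqVneq x z; rewrite ?connect0 ?connect1.
  apply/forallP => x; apply/forallP => y.
  by case/andP: (to_z x) => xz _; case/andP: (to_z y) => _ zy; apply: connect_trans xz zy.
apply/forallP => n; apply/forallP => -[c /= /eqP <-]; apply/implyP => /andP[].
case: c => [|x0 [|x1 [|x2 r]]] //= uniq_c _.
have x02 : x0 != x2 by move: uniq_c; rewrite !inE negb_or => /and3P[/andP[_ /norP[]]].
have x1l : x1 != last x2 r.
  by move: uniq_c => /and3P[_ x1r _]; apply: contraNneq x1r => ->; apply: mem_last.
rewrite rcons_path; apply/negP => /and4P[/star s01 /star s12 _ /star sl0].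
(* Each edge has exactly one end at z, so either x0 = x2 = z or x1 = last x2 r = z. *)
move: x02 x1l s01 s12 sl0.
case: (eqVneq (last x2 r) z) => [? | _]; case: (eqVneq x0 z) => [? | _];
  case: (eqVneq x1 z) => [? | _]; case: (eqVneq x2 z) => [? | _] //; by subst; rewrite ?eqxx.
Qed.

Section StarWalk.

Variables (T : eqType) (z : T).

Definition star_walk (ks : seq T) : seq T := flatten [seq [:: z; k; z; k] | k <- ks].

Lemma size_star_walk ks : size (star_walk ks) = 4 * size ks.
Proof. by elim: ks => //= k ks IH; rewrite IH mulnS. Qed.

Lemma steps_star_walk ks :
  steps (star_walk ks) = flatten [seq [:: (z, k); (k, z); (z, k); (k, z)] | k <- ks].
Proof.
case: ks => // k ks; rewrite /steps rot1_cons /=; congr [:: _, _, _ & _].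
by elim: ks k => //= k' ks IH k; rewrite IH.
Qed.

Lemma wadj_star_walk ks x y :
  z \notin ks -> wadj (star_walk ks) x y -> (x == z) != (y == z).
Proof.
move=> z_ks /hasP[p]; rewrite steps_star_walk => /flatten_mapP[k k_ks].
have kz : k != z by apply: contraNneq z_ks => <-.
rewrite !inE => /or4P[] /eqP-> /orP[] /eqP[<- <-]; by rewrite eqxx (negbTE kz).
Qed.

Lemma wadj_star_walk_center ks k : k \in ks -> wadj (star_walk ks) z k.
Proof.
move=> k_ks; apply/hasP; exists (z, k); rewrite ?eqxx //.
by rewrite steps_star_walk; apply/flatten_mapP; exists k; rewrite ?inE ?eqxx.
Qed.

Lemma wmult_star_walk ks x y : 4 %| wmult (star_walk ks) x y.
Proof.
rewrite /wmult steps_star_walk; elim: ks => //= k ks IH.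
rewrite !addnA dvdn_addl // !xpair_eqE.
by case: (z == x); case: (k == y); case: (z == y); case: (k == x).
Qed.

End StarWalk.

Lemma star_walk_superreduced (n : nat) :
  superreduced (star_walk (ord0 : 'I_n.+2) (enum (predC1 ord0))).
Proof.
set z := ord0; set ks := enum (predC1 z).
have ks_spec x : (x \in ks) = (x != z) by rewrite mem_enum inE.
have z_ks : z \notin ks by rewrite ks_spec eqxx.
apply/orP; right; rewrite /tree_walk -andbA; apply/and3P; split.
- apply/forallP => x; apply/flatten_mapP.
  have [-> | xz] := eqVneq x z; last by exists x; rewrite ?ks_spec ?inE ?eqxx ?orbT.
  by exists ord_max; rewrite ?ks_spec ?inE ?eqxx.
- apply: (star_is_tree (z := z)) => [x y | x]; first exact: wadj_star_walk.
  by rewrite -ks_spec wadj_sym andbb; apply: wadj_star_walk_center.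
apply/forallP => x; apply/forallP => y; apply/implyP => _.
by apply: contraTneq (wmult_star_walk z ks x y) => ->.
Qed.

Lemma s_count_star_gt0 (n : nat) : 0 < s_count n.+1 (2 * n).
Proof.
case: n => [|n]; first by apply/card_gt0P; exists [tuple].
have size_W : size (star_walk (ord0 : 'I_n.+2) (enum (predC1 ord0))) == 2 * (2 * n.+1).
  by rewrite size_star_walk -cardE cardC1 card_ord mulnA.
by apply/card_gt0P; exists (Tuple size_W); rewrite inE star_walk_superreduced.
Qed.

Lemma S_coef_neq0 (xi m l : nat) :
  (S_coef xi m l != 0%R) = (l + 1 == xi + m) && (0 < s_count m l).
Proof.
rewrite /S_coef; have [_ | _] //= := eqVneq (l + 1) (xi + m).
by rewrite mulf_eq0 invr_eq0 !pnatr_eq0 [m`! == 0]eqn0Ngt fact_gt0 orbF lt0n.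
Qed.

Theorem proposition2 :
  (forall (m l xi : nat) (W : seq 'I_m),
      superreduced W -> size W = (2 * l)%N -> (l + 1 = xi + m)%N ->
      (size W <= 4 * xi)%N /\ (m <= xi + 1)%N)
  /\
  (forall xi : nat,
      (forall m l : nat, S_coef xi m l != 0%R -> (m <= xi + 1)%N /\ (l <= 2 * xi)%N)
      /\ (exists l : nat, S_coef xi (xi + 1) l != 0%R)
      /\ (exists m : nat, S_coef xi m (2 * xi) != 0%R)).
Proof.
have walk_bounds m l xi (W : seq 'I_m) :
    superreduced W -> size W = 2 * l -> l + 1 = xi + m -> size W <= 4 * xi /\ m <= xi + 1.
  by move=> /superreduced_size_ge + size_W; rewrite size_W; lia.
split=> // xi.
have star_coef : S_coef xi (xi + 1) (2 * xi) != 0%R.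
  by rewrite S_coef_neq0 !addn1 s_count_star_gt0 andbT; apply/eqP; lia.
split; last by split; [exists (2 * xi) | exists (xi + 1)].
move=> m l; rewrite S_coef_neq0 => /andP[/eqP l_xi /card_gt0P[t]]; rewrite inE => sr_t.
have := walk_bounds m l xi t sr_t (size_tuple t) l_xi; rewrite size_tuple; lia.
Qed.
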